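(* Let $n\geq 0$ and $0\leq l\leq n$ be integers. Then \[ \sum_{k=1}^{n}{n\brack k}\frac{(q/z;q)_k (zq^{-l};q)_{n-k}}{1-q^k} z^k =(zq^{-l};q)_n\left(\sum_{k=1}^{n-l}\frac{zq^{k-1}}{1-zq^{k-1}}-\sum_{k=1}^n\frac{q^k}{1-q^k}\right). \]
   Context: For $N\geq 0$, $(x;q)_N=(1-x)(1-xq)\cdots(1-xq^{N-1})$ (with $(x;q)_0=1$). The $q$-binomial coefficient is ${n\brack k}=\frac{(q;q)_n}{(q;q)_k(q;q)_{n-k}}$ for $0\leq k\leq n$ and $0$ otherwise. The identity is one of rational functions in $q$ and $z$. *)

From mathcomp Require Import all_boot all_order all_algebra.
Set Implicit Arguments. Unset Strict Implicit. Unset Printing Implicit Defensive.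
Import Order.TTheory GRing.Theory Num.Theory.
Local Open Scope ring_scope.

Definition qpoch (F : fieldType) (x q : F) (N : nat) : F :=
  \prod_(i < N) (1 - x * q ^+ i).

Definition qbinom (F : fieldType) (q : F) (n k : nat) : F :=
  if (k <= n)%N then qpoch q q n / (qpoch q q k * qpoch q q (n - k)) else 0.

(* Put a = z q^-l.  Both sides, as functions of n and a, satisfy the recursion
   F_(n+1)(a/q) - F_(n+1)(a) = -(a/q) (1 - q^(n+1)) F_n(a): for the sum this comes from
   (a/q;q)_(m+1) - (a;q)_(m+1) = -(a/q) (1 - q^(m+1)) (a;q)_m and q-absorption.
   Induction on n - l thus reduces the identity to l = n, where
   (q/z;q)_k (zq^-n;q)_(n-k) z^k = (-1)^k q^(k(k+1)/2) (zq^-n;q)_n, and what remains is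
   sum_k [n,k] (-1)^(k-1) q^(k(k+1)/2) / (1 - q^k) = sum_k q^k / (1 - q^k),
   proved by induction on n from the q-Pascal rules and
   sum_k [n,k] (-1)^k q^(k(k-1)/2) = (1;q)_n = 0 for n > 0. *)

From mathcomp Require Import all_boot all_order all_algebra.
From mathcomp Require Import ring zify.
Import GRing.Theory.
Local Open Scope ring_scope.
Set Implicit Arguments. Unset Strict Implicit.

Section QBinomialSums.
Variables (F : fieldType) (q : F).
Implicit Types (x : F) (m n k : nat).

Lemma qpoch0 x : qpoch x q 0 = 1.
Proof. by rewrite /qpoch big_ord0. Qed.

Lemma qpochS x m : qpoch x q m.+1 = qpoch x q m * (1 - x * q ^+ m).
Proof. by rewrite /qpoch big_ord_recr. Qed.

Lemma qpochSl x m : qpoch x q m.+1 = (1 - x) * qpoch (x * q) q m.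
Proof.
rewrite /qpoch big_ord_recl expr0 mulr1; congr (_ * _).
by apply: eq_bigr => i _; rewrite /= exprS mulrA.
Qed.

Lemma qpochD x m k : qpoch x q (m + k) = qpoch x q m * qpoch (x * q ^+ m) q k.
Proof.
rewrite /qpoch big_split_ord; congr (_ * _).
by apply: eq_bigr => i _; rewrite /= exprD mulrA.
Qed.

Lemma qpoch_qqS m : qpoch q q m.+1 = qpoch q q m * (1 - q ^+ m.+1).
Proof. by rewrite qpochS -exprS. Qed.

Lemma qpoch_neq0P x n :
  reflect (forall i, (i < n)%N -> 1 - x * q ^+ i != 0) (qpoch x q n != 0).
Proof.
apply: (iffP (prodf_neq0 _ _)) => [h i lt_in | h i _]; last exact: h.
exact: (h (Ordinal lt_in)).
Qed.

Lemma qpoch_neq0_le x m n : (m <= n)%N -> qpoch x q n != 0 -> qpoch x q m != 0.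
Proof.
move=> le_mn /qpoch_neq0P Pn; apply/qpoch_neq0P => i lt_im.
exact/Pn/(leq_trans lt_im).
Qed.

Lemma qpoch_qq_factor_neq0 n k :
  qpoch q q n != 0 -> (0 < k <= n)%N -> 1 - q ^+ k != 0.
Proof. by case: k => // k /qpoch_neq0P Pn /= lt_kn; rewrite exprS; apply: Pn. Qed.

Lemma qbinomE n k : (k <= n)%N ->
  qbinom q n k = qpoch q q n / (qpoch q q k * qpoch q q (n - k)).
Proof. by rewrite /qbinom => ->. Qed.

Lemma qbinom_out n k : (n < k)%N -> qbinom q n k = 0.
Proof. by rewrite /qbinom ltnNge => /negbTE ->. Qed.

Lemma qbinom0 n : qpoch q q n != 0 -> qbinom q n 0 = 1.
Proof. by move=> Pn; rewrite qbinomE // subn0 qpoch0 mul1r divff. Qed.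

Lemma qbinomS_absorb n k : qpoch q q n.+1 != 0 ->
  qbinom q n.+1 k.+1 * (1 - q ^+ k.+1) = qbinom q n k * (1 - q ^+ n.+1).
Proof.
move=> Pn1; have [le_kn | lt_nk] := leqP k n; last by rewrite !qbinom_out ?mul0r.
have Pk : qpoch q q k != 0 by apply: qpoch_neq0_le Pn1; lia.
have Pnk : qpoch q q (n - k) != 0 by apply: qpoch_neq0_le Pn1; lia.
have qk : 1 - q ^+ k.+1 != 0 by apply: (qpoch_qq_factor_neq0 Pn1); lia.
rewrite !qbinomE // subSS !qpoch_qqS.
by field; rewrite Pk Pnk qk.
Qed.

Lemma qbinomS_absorb_sub n k : qpoch q q n.+1 != 0 ->
  qbinom q n.+1 k * (1 - q ^+ (n.+1 - k)) = qbinom q n k * (1 - q ^+ n.+1).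
Proof.
move=> Pn1; have [le_kn | lt_nk] := leqP k n; last first.
  case: (ltngtP k n.+1) => [|lt_n1k|->]; [lia | by rewrite !qbinom_out ?mul0r |].
  by rewrite subnn subrr mulr0 qbinom_out ?mul0r.
have Pk : qpoch q q k != 0 by apply: qpoch_neq0_le Pn1; lia.
have Pnk : qpoch q q (n - k) != 0 by apply: qpoch_neq0_le Pn1; lia.
have qnk : 1 - q ^+ (n - k).+1 != 0 by apply: (qpoch_qq_factor_neq0 Pn1); lia.
rewrite !qbinomE ?(leqW le_kn) // subSn // !qpoch_qqS.
by field; rewrite Pk Pnk qnk.
Qed.

Lemma qbinomS n k : qpoch q q n.+1 != 0 ->
  qbinom q n.+1 k.+1 = q ^+ k.+1 * qbinom q n k.+1 + qbinom q n k.
Proof.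
move=> Pn1; have [le_kn | lt_nk] := leqP k n; last first.
  by rewrite !qbinom_out ?mulr0 ?addr0 // ltnW.
have qn : 1 - q ^+ n.+1 != 0 by apply: (qpoch_qq_factor_neq0 Pn1); lia.
apply: (mulIf qn); rewrite mulrDl -mulrA -qbinomS_absorb_sub // -qbinomS_absorb //.
have -> : q ^+ n.+1 = q ^+ k.+1 * q ^+ (n.+1 - k.+1) by rewrite -exprD; congr (_ ^+ _); lia.
ring.
Qed.

Lemma qbinomS_dual n k : qpoch q q n.+1 != 0 ->
  qbinom q n.+1 k.+1 = qbinom q n k.+1 + q ^+ (n - k) * qbinom q n k.
Proof.
move=> Pn1; have [le_kn | lt_nk] := leqP k n; last first.
  by rewrite !qbinom_out ?mulr0 ?addr0 // ltnW.
have qn : 1 - q ^+ n.+1 != 0 by apply: (qpoch_qq_factor_neq0 Pn1); lia.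
apply: (mulIf qn); rewrite mulrDl -mulrA -qbinomS_absorb_sub // -qbinomS_absorb //.
have -> : q ^+ n.+1 = q ^+ (n - k) * q ^+ k.+1 by rewrite -exprD; congr (_ ^+ _); lia.
rewrite subSS; ring.
Qed.

(* The coefficients of (x;q)_n = sum_k [n,k] cauchy_coef k x^k. *)
Definition cauchy_coef k : F := (-1) ^+ k * q ^+ 'C(k, 2).

Lemma cauchy_coef0 : cauchy_coef 0 = 1.
Proof. by rewrite /cauchy_coef expr0 bin0n expr0 mulr1. Qed.

Lemma cauchy_coefS k : cauchy_coef k.+1 = - q ^+ k * cauchy_coef k.
Proof. by rewrite /cauchy_coef binS bin1 exprD exprS; ring. Qed.

Lemma sum_qbinom_cauchy_coef n : qpoch q q n.+1 != 0 ->
  \sum_(0 <= k < n.+2) qbinom q n.+1 k * cauchy_coef k = 0.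
Proof.
move=> Pn1; have Pn := qpoch_neq0_le (leqnSn n) Pn1.
(* By q-Pascal, the term of index k+1 is g (k+1) - g k, so the sum telescopes. *)
pose g k := q ^+ k * qbinom q n k * cauchy_coef k.
rewrite big_nat_recl // qbinom0 // cauchy_coef0 mul1r.
transitivity (1 + \sum_(0 <= k < n.+1) (g k.+1 - g k)).
  by congr (_ + _); apply: eq_big_nat => k _; rewrite qbinomS // /g cauchy_coefS; ring.
by rewrite telescope_sumr // /g qbinom_out // qbinom0 // cauchy_coef0; ring.
Qed.

Definition qharm n := \sum_(1 <= k < n.+1) q ^+ k / (1 - q ^+ k).

Lemma qharmS n : qharm n.+1 = qharm n + q ^+ n.+1 / (1 - q ^+ n.+1).
Proof. by rewrite /qharm [LHS]big_nat_recr. Qed.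

Lemma sum_qbinom_cauchy_coefS n : qpoch q q n != 0 ->
  \sum_(1 <= k < n.+1) qbinom q n k * cauchy_coef k.+1 / (1 - q ^+ k) = qharm n.
Proof.
elim: n => [|n IH] Pn; first by rewrite /qharm !big_geq.
have Pn' := qpoch_neq0_le (leqnSn n) Pn.
have qn : 1 - q ^+ n.+1 != 0 by apply: (qpoch_qq_factor_neq0 Pn); lia.
pose t := q ^+ n.+1 / (1 - q ^+ n.+1).
have split_term k : (1 <= k < n.+2)%N ->
    qbinom q n.+1 k * cauchy_coef k.+1 / (1 - q ^+ k)
    = qbinom q n k * cauchy_coef k.+1 / (1 - q ^+ k) - t * (qbinom q n.+1 k * cauchy_coef k).
  case: k => // k /andP[_ lt_kn].
  have qk : 1 - q ^+ k.+1 != 0 by apply: (qpoch_qq_factor_neq0 Pn); lia.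
  have E : qbinom q n k = qbinom q n.+1 k.+1 * (1 - q ^+ k.+1) / (1 - q ^+ n.+1).
    by rewrite qbinomS_absorb // mulfK.
  have Eq : q ^+ n.+1 = q ^+ (n - k) * q ^+ k.+1.
    by rewrite -exprD; congr (_ ^+ _); lia.
  rewrite {1}qbinomS_dual // E (cauchy_coefS k.+1) /t Eq.
  by move: qn; rewrite Eq => qn; field; rewrite qk qn.
have sum_top : \sum_(1 <= k < n.+2) qbinom q n.+1 k * cauchy_coef k = -1.
  have := sum_qbinom_cauchy_coef Pn.
  by rewrite big_ltn // qbinom0 // cauchy_coef0 mul1r addrC => /eqP; rewrite addr_eq0 => /eqP.
rewrite (eq_big_nat _ _ split_term) sumrB -mulr_sumr sum_top big_nat_recr //=.
by rewrite qbinom_out // mul0r mul0r addr0 IH // qharmS /t; ring.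
Qed.

Hypothesis q_neq0 : q != 0.

Lemma qpochS_divq x m :
  qpoch (x / q) q m.+1 = qpoch x q m.+1 - x / q * (1 - q ^+ m.+1) * qpoch x q m.
Proof. by rewrite qpochSl divfK // qpochS exprS; field. Qed.

Definition qbinom_sum (b c a : F) n :=
  \sum_(1 <= k < n.+1)
    qbinom q n k * (qpoch b q k * qpoch a q (n - k)) / (1 - q ^+ k) * c ^+ k.

Lemma qbinom_sum_divq b c a n : qpoch q q n.+1 != 0 ->
  qbinom_sum b c (a / q) n.+1 - qbinom_sum b c a n.+1
  = - (a / q) * (1 - q ^+ n.+1) * qbinom_sum b c a n.
Proof.
move=> Pn1; rewrite /qbinom_sum [X in X - _]big_nat_recr // [X in _ - X]big_nat_recr //=.
rewrite subnn !qpoch0 opprD addrACA subrr addr0 -sumrB mulr_sumr.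
apply: eq_big_nat => k /andP[_ lt_kn].
have absorb := qbinomS_absorb_sub k Pn1; rewrite subSn // in absorb *.
rewrite qpochS_divq.
transitivity (qbinom q n.+1 k * (1 - q ^+ (n - k).+1)
  * (- (a / q) * (qpoch b q k * qpoch a q (n - k)) / (1 - q ^+ k) * c ^+ k)).
  by ring.
by rewrite absorb; ring.
Qed.

Lemma qpoch_reflect z k : z != 0 ->
  qpoch (q / z) q k * z ^+ k = - cauchy_coef k.+1 * qpoch (z * q ^- k) q k.
Proof.
move=> z_neq0; elim: k => [|k IH].
  by rewrite !qpoch0 (cauchy_coefS 0) cauchy_coef0; ring.
rewrite qpochS (qpochSl (z * q ^- k.+1)) (cauchy_coefS k.+1).
have -> : z * q ^- k.+1 * q = z * q ^- k by rewrite exprSr invfM mulrA divfK.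
transitivity ((qpoch (q / z) q k * z ^+ k) * ((1 - q / z * q ^+ k) * z)).
  by rewrite exprS; ring.
by rewrite IH exprS; field; rewrite expf_neq0 ?q_neq0 ?z_neq0.
Qed.

(* -x d/dx log (x;q)_m *)
Definition qlogder (x : F) m :=
  \sum_(1 <= k < m.+1) x * q ^+ k.-1 / (1 - x * q ^+ k.-1).

Lemma qlogderS x m : qlogder x m.+1 = qlogder x m + x * q ^+ m / (1 - x * q ^+ m).
Proof. by rewrite /qlogder big_nat_recr. Qed.

Definition qrhs z n l :=
  qpoch (z * q ^- l) q n * (qlogder z (n - l) - qharm n).

Lemma qbinom_sum_base z n : z != 0 -> qpoch q q n != 0 ->
  qbinom_sum (q / z) z (z * q ^- n) n = qrhs z n n.
Proof.
move=> z_neq0 Pn.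
rewrite /qrhs subnn /qlogder big_geq // sub0r -(sum_qbinom_cauchy_coefS Pn).
rewrite mulrN mulr_sumr -sumrN; apply: eq_big_nat => k /andP[_]; rewrite ltnS => le_kn.
have Pn_split : qpoch (z * q ^- n) q n
    = qpoch (z * q ^- n) q (n - k) * qpoch (z * q ^- k) q k.
  rewrite -{2}(subnK le_kn) qpochD; congr (_ * qpoch _ q k).
  by rewrite -{1}(subnK le_kn) exprD; field; rewrite !expf_neq0.
transitivity (qbinom q n k / (1 - q ^+ k) * (qpoch (q / z) q k * z ^+ k)
  * qpoch (z * q ^- n) q (n - k)); first by ring.
by rewrite qpoch_reflect // Pn_split; ring.
Qed.

Lemma qrhs_divq z n l : (l <= n)%N ->
  1 - q ^+ n.+1 != 0 -> 1 - z * q ^+ (n - l) != 0 ->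
  qrhs z n.+1 l.+1 - qrhs z n.+1 l = - (z * q ^- l / q) * (1 - q ^+ n.+1) * qrhs z n l.
Proof.
move=> le_ln qn zn; rewrite /qrhs subSS (subSn le_ln) (exprSr q l) invfM mulrA.
rewrite qpochSl divfK // (qpochS (z * q ^- l)).
rewrite qlogderS qharmS.
have En : q ^+ n = q ^+ l * q ^+ (n - l) by rewrite -exprD subnKC.
rewrite exprS En in qn *.
by field; rewrite q_neq0 qn zn expf_neq0.
Qed.

Lemma qbinom_sum_qrhs z n l : z != 0 ->
  qpoch q q n != 0 -> qpoch z q (n - l) != 0 -> (l <= n)%N ->
  qbinom_sum (q / z) z (z * q ^- l) n = qrhs z n l.
Proof.
move=> z_neq0; move Em: (n - l)%N => m.
elim: m n l Em => [|m IH] n l Em Pn Pz le_ln.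
  have -> : l = n by lia.
  exact: qbinom_sum_base.
case: n => [|n] in Em Pn le_ln *; first by lia.
have Pn' := qpoch_neq0_le (leqnSn n) Pn.
have Pz' := qpoch_neq0_le (leqnSn m) Pz.
have qn : 1 - q ^+ n.+1 != 0 by apply: (qpoch_qq_factor_neq0 Pn); lia.
have zn : 1 - z * q ^+ (n - l) != 0.
  by move/qpoch_neq0P: Pz; apply; lia.
have le_ln' : (l <= n)%N by lia.
have IH1 := IH n.+1 l.+1 ltac:(lia) Pn Pz' ltac:(lia).
have IH2 := IH n l ltac:(lia) Pn' Pz' le_ln'.
rewrite exprSr invfM mulrA in IH1.
have := qbinom_sum_divq (q / z) z (z * q ^- l) Pn.
rewrite IH1 IH2 -(qrhs_divq le_ln' qn zn).
exact: subrI.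
Qed.

End QBinomialSums.

Theorem corollary3p2 (F : fieldType) (q z : F) (n l : nat)
  (hln : (l <= n)%N)
  (hq : q != 0) (hz : z != 0)
  (hqk : forall k : nat, (1 <= k <= n)%N -> 1 - q ^+ k != 0)
  (hzk : forall k : nat, (1 <= k <= n - l)%N -> 1 - z * q ^+ k.-1 != 0) :
  \sum_(1 <= k < n.+1)
     qbinom q n k * (qpoch (q / z) q k * qpoch (z * q ^- l) q (n - k))
       / (1 - q ^+ k) * z ^+ k
  = qpoch (z * q ^- l) q n *
    (\sum_(1 <= k < (n - l).+1) (z * q ^+ k.-1) / (1 - z * q ^+ k.-1)
     - \sum_(1 <= k < n.+1) q ^+ k / (1 - q ^+ k)).
Proof.
have Pn : qpoch q q n != 0 by apply/qpoch_neq0P => i lt_in; rewrite -exprS hqk.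
have Pz : qpoch z q (n - l) != 0 by apply/qpoch_neq0P => i lt_i; exact: (hzk i.+1).
have := qbinom_sum_qrhs hq hz Pn Pz hln.
by rewrite /qbinom_sum /qrhs /qlogder /qharm.
Qed.
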